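(* Consider the model and the LinUCB-d algorithm described in the context, under assumptions (A1) and (A2). Let $\{\Phi_b\}$ be any choice of matrices as in the context, and let $\mathcal{C}_b^{(i)}$ be defined as there. Then for any arms $a,b\in[K]$ with $b\neq a$, any $i\in\{1,\dots,d\}$, and every $t\ge1$, \[ \bar N_t(a,\mathcal{C}_b^{(i)})\le\frac{8\alpha_t^2}{\Delta^2}\,d\log\Big(\frac{d+t}{d}\Big). \]
   Context: Model: $K$ arms $[K]$; each arm $a$ has an unknown parameter $\boldsymbol{\theta}(a)\in\mathbb{R}^d$; context set $\mathcal{C}$ and known feature vectors $\mathbf{x}(a,c)\in\mathbb{R}^d$. At each time $t$ the learner observes $c_t$, pulls $a_t$, observes $y_t=r(a_t,c_t)+\eta_t$ with $r(a,c)=\boldsymbol{\theta}(a)^\intercal\mathbf{x}(a,c)$. $\mathcal{C}_a=\{c: r(a,c)>r(b,c)\ \forall b\neq a\}$, $\mathcal{X}_a=\{\mathbf{x}(a,c):c\in\mathcal{C}_a\}$. (A1) $\|\boldsymbol{\theta}(a)\|_2\le s$, $\|\mathbf{x}(a,c)\|_2\le l$. (A2) There is $\Delta>0$ with $r(a,c)-r(b,c)\ge\Delta$ for all $a$, $b\ne a$, $c\in\mathcal{C}_a$. Algorithm LinUCB-d: $f(t)=1+t\log^2 t$, $\alpha_t=ls+\sqrt{(2+d)\log f(t)}$; $\mathbf{V}_t(a)=l^2\mathbf{I}_d+\sum_{\tau<t:\,a_\tau=a}\mathbf{x}(a,c_\tau)\mathbf{x}(a,c_\tau)^\intercal$, $\mathbf{b}_t(a)=\sum_{\tau<t:\,a_\tau=a}y_\tau\mathbf{x}(a,c_\tau)$,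 $\hat r_t(a)=\mathbf{x}(a,c_t)^\intercal\mathbf{V}_t(a)^{-1}\mathbf{b}_t(a)$, $\hat\sigma_t(a)=\sqrt{\mathbf{x}(a,c_t)^\intercal\mathbf{V}_t(a)^{-1}\mathbf{x}(a,c_t)}$; it pulls $a_t\in\arg\max_a\hat r_t(a)+\alpha_t\hat\sigma_t(a)$. Bad estimates: a time $\tau$ is bad if there is an arm $a'$ with $|\hat r_\tau(a')-r(a',c_\tau)|>\alpha_\tau\hat\sigma_\tau(a')$; $\mathcal{B}_t$ is the set of bad times in $[1,t)$. Groups: for each $b$, $\Phi_b$ is a $d\times d$ matrix with columns $\phi_b^{(1)},\dots,\phi_b^{(d)}\in\mathcal{X}_b$ and $\lambda_{\min}(\Phi_b^\intercal\Phi_b)>0$. $\mathcal{X}_b^{(i)}$ is the set of $\mathbf{x}\in\mathcal{X}_b$ with $\mathbf{x}^\intercal\phi_b^{(i)}/\|\phi_b^{(i)}\|_2<\mathbf{x}^\intercal\phi_b^{(j)}/\|\phi_b^{(j)}\|_2$ for all $j<i$ and $\le$ for all $j>i$; and $\mathcal{C}_b^{(i)}=\{c\in\mathcal{C}_b:\mathbf{x}(b,c)\in\mathcal{X}_b^{(i)}\}$. Counts: $\bar N_t(a,\mathcal{C}_b^{(i)})$ is the number of times $\tau$ with $1\le\tau<t$, $a_\tau=a$, $c_\tau\in\mathcal{C}_b^{(i)}$ and $\tau\notin\mathcal{B}_t$. *)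

From HB Require Import structures.
From mathcomp Require Import all_boot all_order all_algebra.
From mathcomp Require Import reals exp.
Set Implicit Arguments.
Unset Strict Implicit.
Unset Printing Implicit Defensive.
Import Order.TTheory GRing.Theory Num.Theory.
Local Open Scope ring_scope.

Definition dotv (R : realType) (d : nat) (u v : 'cV[R]_d) : R :=
  (u^T *m v) ord0 ord0.
Definition norm2 (R : realType) (d : nat) (v : 'cV[R]_d) : R :=
  Num.sqrt (dotv v v).

Section LinUCBd.
Variables (R : realType) (K d : nat) (C : Type).
Variable x : 'I_K -> C -> 'cV[R]_d.
Variable theta : 'I_K -> 'cV[R]_d.
Variables (l s : R).
(* realized contexts c_t, noise eta_t, pulled arms a_t (times t >= 1) *)
Variable cs : nat -> C.
Variable eta : nat -> R.
Variable acts : nat -> 'I_K.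

Definition rew (a : 'I_K) (c : C) : R := dotv (theta a) (x a c).

Definition yobs (t : nat) : R := rew (acts t) (cs t) + eta t.

Definition Vmat (t : nat) (a : 'I_K) : 'M[R]_d :=
  l ^+ 2 *: 1%:M +
  \sum_(1 <= tau < t | acts tau == a) (x a (cs tau) *m (x a (cs tau))^T).

Definition bvec (t : nat) (a : 'I_K) : 'cV[R]_d :=
  \sum_(1 <= tau < t | acts tau == a) (yobs tau *: x a (cs tau)).

Definition rhat (t : nat) (a : 'I_K) : R :=
  dotv (x a (cs t)) (invmx (Vmat t a) *m bvec t a).

Definition sighat (t : nat) (a : 'I_K) : R :=
  Num.sqrt (dotv (x a (cs t)) (invmx (Vmat t a) *m x a (cs t))).

Definition ffun (t : nat) : R := 1 + t%:R * (ln (t%:R : R)) ^+ 2.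
Definition alpha (t : nat) : R := l * s + Num.sqrt ((2 + d%:R) * ln (ffun t)).

Definition linucb_d_rule : Prop :=
  forall t : nat, (1 <= t)%N -> forall a' : 'I_K,
    rhat t a' + alpha t * sighat t a' <=
    rhat t (acts t) + alpha t * sighat t (acts t).

Definition bad (tau : nat) : bool :=
  [exists a' : 'I_K,
     alpha tau * sighat tau a' < `|rhat tau a' - rew a' (cs tau)|].

Definition Cb (b : 'I_K) (c : C) : bool :=
  [forall b' : 'I_K, (b' != b) ==> (rew b' c < rew b c)].

Definition projPhi (Phi : 'I_K -> 'M[R]_d) (b : 'I_K) (j : 'I_d)
    (v : 'cV[R]_d) : R :=
  dotv v (col j (Phi b)) / norm2 (col j (Phi b)).

(* C_b^(i) (indices 0-based: 'I_d stands for {1,...,d}) *)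
Definition Cbi (Phi : 'I_K -> 'M[R]_d) (b : 'I_K) (i : 'I_d) (c : C) : bool :=
  Cb b c &&
  [forall j : 'I_d,
     ((j < i)%N ==> (projPhi Phi b i (x b c) < projPhi Phi b j (x b c))) &&
     ((i < j)%N ==> (projPhi Phi b i (x b c) <= projPhi Phi b j (x b c)))].

(* \bar N_t(a, P): number of 1 <= tau < t with a_tau = a, c_tau in P,
   tau not in B_t (i.e. tau not bad) *)
Definition Nbar (t : nat) (a : 'I_K) (P : C -> bool) : nat :=
  count (fun tau => [&& acts tau == a, P (cs tau) & ~~ bad tau])
        (iota 1 t.-1).

End LinUCBd.

(* At a good round tau < t where arm a is pulled although the context lies in C_b, the
   optimistic index of a beats that of the optimal arm b while both confidence intervals
   hold, so Delta <= 2 alpha_tau sigma_tau(a) <= 2 alpha_t sigma_tau(a).  Each counted round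
   thus contributes at least Delta^2 / (4 alpha_t^2) to the sum of the squared widths
   sigma_tau(a)^2 = x^T V_tau(a)^-1 x, which lie in [0, 1] because V >= l^2 I and |x| <= l.
   That sum is the elliptical potential: by the matrix determinant lemma every pull of a
   multiplies det V(a) by 1 + sigma^2, and u <= 2 log (1 + u) on [0, 1]; Hadamard's
   inequality and AM-GM bound det V_t(a) by (tr V_t(a) / d)^d <= (l^2 (d + t) / d)^d,
   while det V_1(a) = l^(2d). *)

From HB Require Import structures.
From mathcomp Require Import all_boot all_order all_algebra.
From mathcomp Require Import reals exp.
From mathcomp Require Import ring lra.
Set Implicit Arguments.
Unset Strict Implicit.
Unset Printing Implicit Defensive.
Import Order.TTheory GRing.Theory Num.Theory.
Local Open Scope ring_scope.

Section PositiveDefinite.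
Variable R : realFieldType.

Definition qform n (M : 'M[R]_n) (v : 'cV[R]_n) : R := (v^T *m M *m v) 0 0.

Definition posdefmx n (M : 'M[R]_n) : Prop :=
  M^T = M /\ forall v, v != 0 -> 0 < qform M v.

Lemma posdefmx_unit n (M : 'M[R]_n) : posdefmx M -> M \in unitmx.
Proof.
move=> [_ Mpos]; rewrite unitmxE unitfE; apply/det0P => -[v v0 vM0].
have := Mpos v^T; rewrite trmx_eq0 => /(_ v0).
by rewrite /qform trmxK vM0 mul0mx mxE ltxx.
Qed.

Lemma posdefmx_diag_gt0 n (M : 'M[R]_n) i : posdefmx M -> 0 < M i i.
Proof.
move=> [_ Mpos]; have e_neq0 : delta_mx i 0 != 0 :> 'cV[R]_n.
  by apply/eqP => /matrixP /(_ i 0); rewrite !mxE !eqxx; apply/eqP/oner_neq0.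
by have := Mpos _ e_neq0; rewrite /qform trmx_delta -rowE -colE !mxE.
Qed.

Lemma qform_col_mx n1 n2 (M : 'M[R]_(n1 + n2)) (w1 : 'cV_n1) (w2 : 'cV_n2) :
  qform M (col_mx w1 w2) =
  ((w1^T *m ulsubmx M + w2^T *m dlsubmx M) *m w1
   + (w1^T *m ursubmx M + w2^T *m drsubmx M) *m w2) 0 0.
Proof.
rewrite /qform -{1}(submxK M).
by rewrite tr_col_mx mul_row_block mul_row_col.
Qed.

Lemma posdefmx_drsubmx n1 n2 (M : 'M[R]_(n1 + n2)) :
  posdefmx M -> posdefmx (drsubmx M).
Proof.
move=> [Msym Mpos]; split; first by rewrite trmx_drsub Msym.
move=> w w0; have := Mpos (col_mx 0 w); rewrite col_mx_eq0 eqxx (negbTE w0).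
by rewrite qform_col_mx !trmx0 !mul0mx !mulmx0 !add0r; apply.
Qed.

(* The Schur complement of the lower right block is a positive scalar below the corner entry. *)
Lemma posdefmx_schur n (M : 'M[R]_(1 + n)) : posdefmx M ->
  exists2 c, 0 < c <= ulsubmx M 0 0 & \det M = c * \det (drsubmx M).
Proof.
move=> Mpd; have [Msym Mpos] := Mpd.
set c := ulsubmx M; set u := ursubmx M; set v := dlsubmx M; set A := drsubmx M.
have vu : v = u^T by rewrite /v /u trmx_ursub Msym.
have Apd : posdefmx A := posdefmx_drsubmx Mpd.
have Aunit := posdefmx_unit Apd.
pose y := invmx A *m v.
have Ay : A *m y = v by rewrite /y mulmxA mulmxV // mul1mx.
have yA : y^T *m A = u by rewrite -(proj1 Apd) -trmx_mul Ay vu trmxK.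
have uy_ge0 : 0 <= (u *m y) 0 0.
  have -> : (u *m y) 0 0 = qform A y by rewrite /qform yA.
  have [->|y0] := eqVneq y 0; first by rewrite /qform mulmx0 mxE.
  exact/ltW/(proj2 Apd).
exists ((c - u *m y) 0 0).
  rewrite mxE [X in _ + X]mxE gerDl oppr_le0 uy_ge0 andbT.
  have := Mpos (col_mx 1%:M (- y)); rewrite col_mx_eq0 -scalemx1 scalemx_eq0.
  rewrite oner_eq0 /= -[_ == 0]negbK -mxrank_eq0 mxrank1 => /(_ isT).
  rewrite qform_col_mx scalemx1 trmx1 !mul1mx mulmx1 linearN /= !mulNmx yA.
  have -> : y^T *m v = u *m y by rewrite -Ay mulmxA yA.
  by rewrite subrr mul0mx addr0 mxE [X in _ < _ + X]mxE.
have factor : M = block_mx 1%:M (u *m invmx A) 0 1%:M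
                  *m block_mx (c - u *m y) 0 v A.
  rewrite mulmx_block !mul1mx !mul0mx ?mulmx0 !add0r ?addr0 mulmxKV //.
  by rewrite -mulmxA -/y subrK submxK.
by rewrite {1}factor det_mulmx det_ublock det_lblock !det1 !mul1r det_mx11.
Qed.

Lemma hadamard n (M : 'M[R]_n) : posdefmx M ->
  0 < \det M /\ \det M <= \prod_i M i i.
Proof.
elim: n M => [|n IH] M Mpd; first by rewrite det_mx00 big_ord0.
pose M' : 'M_(1 + n) := M; have M'pd : posdefmx M' := Mpd.
change (0 < \det M' /\ \det M' <= \prod_(i < 1 + n) M' i i).
have [c /andP [c_gt0 c_le] detM] := posdefmx_schur M'pd.
have [detA_gt0 detA_le] := IH _ (posdefmx_drsubmx M'pd).
rewrite detM pmulr_rgt0 //; split => //.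
rewrite big_split_ord big_ord1 /=.
apply: ler_pM; [exact: ltW | exact: ltW | by move: c_le; rewrite !mxE |].
by apply: le_trans detA_le _; under eq_bigr do rewrite !mxE.
Qed.

End PositiveDefinite.

Section MatrixDeterminantLemma.
Variable R : comUnitRingType.

Lemma det_1addmx_rank1 n (u : 'cV[R]_n) (w : 'rV[R]_n) :
  \det (1%:M + u *m w) = 1 + (w *m u) 0 0.
Proof.
pose P : 'M[R]_(1 + n) := block_mx 1%:M (- w) u 1%:M.
have P_lu : P = block_mx 1%:M 0 u 1%:M *m block_mx 1%:M (- w) 0 (1%:M + u *m w).
  rewrite mulmx_block !mul1mx !mul0mx !mulmx1 ?add0r ?addr0 ?mulmxN.
  by rewrite [X in block_mx _ _ _ X]addrC addrK.
have P_ul : P = block_mx 1%:M (- w) 0 1%:M *m block_mx (1%:M + w *m u) 0 u 1%:M.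
  rewrite mulmx_block !mul1mx !mul0mx !mulmx1 ?mulmx0 ?add0r ?addr0 ?mulNmx.
  by rewrite addrK.
have := congr1 determinant P_ul; rewrite P_lu !det_mulmx.
rewrite det_lblock !det_ublock det_lblock !det1 !mul1r !mulr1 => ->.
by rewrite det_mx11 !mxE.
Qed.

Lemma det_addmx_rank1 n (V : 'M[R]_n) (u : 'cV[R]_n) (w : 'rV[R]_n) :
  V \in unitmx -> \det (V + u *m w) = \det V * (1 + (w *m (invmx V *m u)) 0 0).
Proof.
move=> Vunit; have -> : V + u *m w = V *m (1%:M + (invmx V *m u) *m w).
  by rewrite mulmxDr mulmx1 !mulmxA mulmxV // mul1mx.
by rewrite det_mulmx det_1addmx_rank1.
Qed.

End MatrixDeterminantLemma.

Section InnerProduct.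
Variable R : realType.

Lemma dotvE n (u v : 'cV[R]_n) : dotv u v = \sum_i u i 0 * v i 0.
Proof. by rewrite /dotv mxE; apply: eq_bigr => i _; rewrite mxE. Qed.

Lemma dotvC n (u v : 'cV[R]_n) : dotv u v = dotv v u.
Proof. by rewrite !dotvE; apply: eq_bigr => i _; rewrite mulrC. Qed.

Lemma dotv0l n (v : 'cV[R]_n) : dotv 0 v = 0.
Proof. by rewrite /dotv trmx0 mul0mx mxE. Qed.

Lemma dotv_ge0 n (v : 'cV[R]_n) : 0 <= dotv v v.
Proof. by rewrite dotvE sumr_ge0 // => i _; rewrite -expr2 sqr_ge0. Qed.

Lemma dotv_eq0 n (v : 'cV[R]_n) : (dotv v v == 0) = (v == 0).
Proof.
apply/idP/idP => [|/eqP ->]; last by rewrite dotv0l.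
rewrite dotvE psumr_eq0 => [/allP v0|i _]; last by rewrite -expr2 sqr_ge0.
apply/eqP/matrixP => i j; rewrite (ord1 j) mxE.
by have /implyP/(_ isT) := v0 i (mem_index_enum i); rewrite mulf_eq0 orbb => /eqP.
Qed.

Lemma qform_dotv n (M : 'M[R]_n) (v : 'cV[R]_n) : qform M v = dotv v (M *m v).
Proof. by rewrite /qform /dotv mulmxA. Qed.

Lemma dotv_le_sqr n (v : 'cV[R]_n) (l : R) : norm2 v <= l -> dotv v v <= l ^+ 2.
Proof.
move=> vl; rewrite -(sqr_sqrtr (dotv_ge0 v)) !expr2.
by apply: ler_pM => //; exact: sqrtr_ge0.
Qed.

End InnerProduct.

Lemma le_2ln1Dx (R : realType) (u : R) : 0 <= u <= 1 -> u <= 2 * ln (1 + u).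
Proof.
case/andP=> u0 u1.
have h : ln (1 + - (u / (1 + u))) <= - (u / (1 + u)).
  by apply: le_ln1Dx; rewrite ltrN2 ltr_pdivrMr; lra.
have e : 1 + - (u / (1 + u)) = (1 + u)^-1 by field; lra.
rewrite e lnV ?posrE in h; last lra.
have : u / (1 + u) <= ln (1 + u) by lra.
rewrite ler_pdivrMr; [nra | lra].
Qed.

Section EllipticalPotential.
Variables (R : realType) (d : nat) (l : R) (g : nat -> 'cV[R]_d) (P : pred nat).

Definition gram t : 'M[R]_d :=
  l ^+ 2 *: 1%:M + \sum_(1 <= tau < t | P tau) g tau *m (g tau)^T.

Definition leverage t : R := dotv (g t) (invmx (gram t) *m g t).

Lemma tr_gram t : (gram t)^T = gram t.
Proof.
rewrite /gram linearD /= linearZ /= trmx1 linear_sum /=.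
by congr (_ + _); apply: eq_bigr => tau _; rewrite trmx_mul trmxK.
Qed.

Lemma qform_gram t v : qform (gram t) v =
  l ^+ 2 * dotv v v + \sum_(1 <= tau < t | P tau) dotv (g tau) v ^+ 2.
Proof.
rewrite /qform /gram mulmxDr mulmxDl mxE; congr (_ + _).
  by rewrite -scalemxAr mulmx1 -scalemxAl mxE.
rewrite mulmx_sumr mulmx_suml summxE; apply: eq_bigr => tau _.
rewrite mulmxA -mulmxA mxE big_ord1 expr2.
by rewrite -/(dotv v (g tau)) -/(dotv (g tau) v) dotvC.
Qed.

Lemma gram_posdef t : l != 0 -> posdefmx (gram t).
Proof.
move=> l0; split=> [|v v0]; first exact: tr_gram.
rewrite qform_gram ltr_wpDr ?sumr_ge0 // => [tau _|]; first exact: sqr_ge0.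
by rewrite mulr_gt0 // lt_def ?sqrf_eq0 ?dotv_eq0 ?l0 ?v0 ?sqr_ge0 ?dotv_ge0.
Qed.

Lemma gram_unit t : l != 0 -> gram t \in unitmx.
Proof. by move=> l0; apply/posdefmx_unit/gram_posdef. Qed.

Lemma gram1 : gram 1 = (l ^+ 2)%:M.
Proof. by rewrite /gram big_geq // addr0 scalemx1. Qed.

Lemma gramS t : (1 <= t)%N ->
  gram t.+1 = gram t + (if P t then g t *m (g t)^T else 0).
Proof.
move=> t1; rewrite /gram -addrA; congr (_ + _).
by rewrite big_mkcond big_nat_recr //= -big_mkcond.
Qed.

Lemma mxtrace_gram t :
  \tr (gram t) = d%:R * l ^+ 2 + \sum_(1 <= tau < t | P tau) dotv (g tau) (g tau).
Proof.
rewrite /gram mxtraceD mxtraceZ mxtrace1 mulrC raddf_sum /=; congr (_ + _).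
by apply: eq_bigr => tau _; rewrite mxtrace_mulC /mxtrace big_ord1.
Qed.

Hypothesis g_le : forall tau, dotv (g tau) (g tau) <= l ^+ 2.

Lemma leverage_eq0 t : l = 0 -> leverage t = 0.
Proof.
move=> l0; have /eqP g0 : g t == 0.
  by rewrite -dotv_eq0 eq_le dotv_ge0 andbT; have := g_le t; rewrite l0 expr0n.
by rewrite /leverage g0 dotv0l.
Qed.

Lemma leverage_ge0_le1 t : 0 <= leverage t <= 1.
Proof.
have [l0|l0] := eqVneq l 0; first by rewrite leverage_eq0 // lexx ler01.
pose V := gram t; pose y := invmx V *m g t.
have Vy : V *m y = g t by rewrite /y mulmxA mulmxV ?gram_unit // mul1mx.
have levE : leverage t = qform V y by rewrite qform_dotv Vy dotvC.
have lev_ge : l ^+ 2 * dotv y y <= leverage t.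
  by rewrite levE qform_gram lerDl sumr_ge0 // => tau _; rewrite sqr_ge0.
(* leverage t = g^T y; expand [|g - l^2 y|^2 >= 0] *)
have lev_le : 2 * l ^+ 2 * leverage t <= dotv (g t) (g t) + l ^+ 2 * l ^+ 2 * dotv y y.
  rewrite /leverage -/V -/y !dotvE !mulr_sumr -big_split /=.
  by apply: ler_sum => i _; have := sqr_ge0 (g t i 0 - l ^+ 2 * y i 0); nra.
have l2_gt0 : 0 < l ^+ 2 by rewrite lt_def sqrf_eq0 l0 sqr_ge0.
have := g_le t; have := dotv_ge0 y; nra.
Qed.

Lemma sum_leverage_le_ln_det t : l != 0 -> (1 <= t)%N ->
  \sum_(1 <= tau < t | P tau) leverage tau
    <= 2 * (ln (\det (gram t)) - ln (\det (gram 1))).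
Proof.
move=> l0; elim: t => // t IH t1.
have [->|t_gt0] := posnP t; first by rewrite big_geq // subrr mulr0.
rewrite big_mkcond big_nat_recr //= -big_mkcond gramS //.
case: (P t); last by rewrite !addr0; exact: IH.
have det_gt0 u := proj1 (hadamard (gram_posdef u l0)).
rewrite det_addmx_rank1 ?gram_unit // lnM ?posrE ?det_gt0 //; last first.
  by have /andP [lev0 _] := leverage_ge0_le1 t; rewrite ltr_wpDr.
have := IH t_gt0; have := le_2ln1Dx (leverage_ge0_le1 t); rewrite /leverage.
lra.
Qed.

Lemma ln_det_gram_le t : l != 0 -> (0 < d)%N ->
  ln (\det (gram t)) <= d%:R * ln (l ^+ 2 * ((d%:R + t%:R) / d%:R)).
Proof.
move=> l0 d_gt0; have Vpd := gram_posdef t l0.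
have d0 : (0 : R) < d%:R by rewrite ltr0n.
have l2_gt0 : 0 < l ^+ 2 by rewrite lt_def sqrf_eq0 l0 sqr_ge0.
have bound_gt0 : 0 < l ^+ 2 * ((d%:R + t%:R) / d%:R).
  by apply: mulr_gt0 => //; rewrite divr_gt0 // ltr_wpDr.
have mean_gt0 : 0 < \tr (gram t) / d%:R.
  rewrite divr_gt0 // mxtrace_gram; apply: ltr_wpDr; last exact: mulr_gt0.
  by apply: sumr_ge0 => tau _; exact: dotv_ge0.
have det_le_mean : \det (gram t) <= (\tr (gram t) / d%:R) ^+ d.
  apply: le_trans (proj2 (hadamard Vpd)) _.
  have := leif_AGM (A := predT) (fun i _ => ltW (posdefmx_diag_gt0 i Vpd)).
  by rewrite card_ord => -[AGM _]; exact: AGM.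
have tr_le : \tr (gram t) <= l ^+ 2 * (d%:R + t%:R).
  rewrite mxtrace_gram mulrDr [l ^+ 2 * d%:R]mulrC lerD2l.
  apply: (@le_trans _ _ (\sum_(1 <= tau < t) l ^+ 2)).
    rewrite big_mkcond /=; apply: ler_sum => tau _.
    by case: (P tau) => //; exact: sqr_ge0.
  rewrite sumr_const_nat -[_ *+ (t - 1)]mulr_natr; apply: ler_wpM2l; first exact: sqr_ge0.
  by rewrite ler_nat leq_subr.
rewrite mulr_natl -lnXn // ler_ln ?posrE ?(proj1 (hadamard Vpd)) ?exprn_gt0 //.
apply: le_trans det_le_mean _; rewrite lerXn2r ?nnegrE ?(ltW mean_gt0) ?(ltW bound_gt0) //.
by rewrite mulrA ler_pM2r ?invr_gt0.
Qed.

Lemma elliptical_potential t : (1 <= t)%N ->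
  \sum_(1 <= tau < t | P tau) leverage tau
    <= 2 * d%:R * ln ((d%:R + t%:R) / d%:R).
Proof.
move=> t1; have [d_eq0|d_gt0] := posnP d.
  rewrite d_eq0 mulr0 mul0r big1 // => tau _.
  have g0 : g tau = 0 by apply/matrixP => i; have := ltn_ord i; rewrite {2}d_eq0.
  by rewrite /leverage g0 dotv0l.
have d0 : (0 : R) < d%:R by rewrite ltr0n.
have [l0|l0] := eqVneq l 0.
  rewrite big1 ?mulr_ge0 ?ler0n ?ln_ge0 // => [|tau _].
    by rewrite ler_pdivlMr // mul1r lerDl.
  exact: leverage_eq0.
have l2_gt0 : 0 < l ^+ 2 by rewrite lt_def sqrf_eq0 l0 sqr_ge0.
apply: le_trans (sum_leverage_le_ln_det l0 t1) _.
have := ln_det_gram_le t l0 d_gt0.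
rewrite gram1 det_scalar lnXn // lnM ?posrE ?divr_gt0 ?ltr_wpDr // -mulr_natl.
lra.
Qed.

End EllipticalPotential.

Lemma ler_count_sum (R : numDomainType) (I : eqType) (r : seq I) (P Q : pred I)
    (c : R) (F : I -> R) :
  subpred Q P -> (forall i, P i -> 0 <= F i) -> {in r, forall i, Q i -> c <= F i} ->
  (count Q r)%:R * c <= \sum_(i <- r | P i) F i.
Proof.
move=> QP F_ge0; elim: r => [_|i r IH /forall_cons [Fi /IH {}IH]].
  by rewrite big_nil mul0r.
rewrite big_cons natrD mulrDl.
have [Qi|_] := boolP (Q i); first by rewrite QP // mul1r lerD ?Fi.
by rewrite mul0r add0r; case: ifP => // Pi; rewrite ler_wpDl ?F_ge0.
Qed.

Section ExplorationRate.
Variable R : realType.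

Lemma ffun_ge1 n : 1 <= ffun R n.
Proof. by rewrite /ffun lerDl mulr_ge0 ?sqr_ge0. Qed.

Lemma le_ffun m n : (m <= n)%N -> ffun R m <= ffun R n.
Proof.
case: m => [_|m mn]; first by rewrite {1}/ffun mul0r addr0 ffun_ge1.
rewrite /ffun lerD2l; apply: ler_pM; rewrite ?sqr_ge0 ?ler_nat //.
have ln_m_ge0 : 0 <= ln (m.+1%:R : R) by rewrite ln_ge0 // ler1n.
rewrite lerXn2r ?nnegrE ?(le_trans ln_m_ge0) ?ler_ln ?posrE ?ler_nat //.
all: by rewrite ltr0n (leq_trans _ mn).
Qed.

Lemma le_alpha (d : nat) (l s : R) m n : (m <= n)%N -> alpha d l s m <= alpha d l s n.
Proof.
move=> mn; have ln_ffun_ge0 k : 0 <= ln (ffun R k) by rewrite ln_ge0 ?ffun_ge1.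
rewrite /alpha lerD2l ler_sqrt ?mulr_ge0 ?addr_ge0 //.
rewrite ler_wpM2l ?addr_ge0 // ler_ln ?posrE ?le_ffun //.
all: exact: lt_le_trans ltr01 (ffun_ge1 _).
Qed.

End ExplorationRate.

Section LinUCBd.
Variables (R : realType) (K d : nat) (C : Type).
Variables (x : 'I_K -> C -> 'cV[R]_d) (theta : 'I_K -> 'cV[R]_d).
Variables (l s Delta : R) (cs : nat -> C) (eta : nat -> R) (acts : nat -> 'I_K).

Hypothesis x_le : forall a c, norm2 (x a c) <= l.

Let feature_le a tau : dotv (x a (cs tau)) (x a (cs tau)) <= l ^+ 2 :=
  dotv_le_sqr (x_le a (cs tau)).

Lemma sqr_sighat a tau : sighat x l cs acts tau a ^+ 2 =
  leverage l (fun tau => x a (cs tau)) (fun tau => acts tau == a) tau.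
Proof.
rewrite sqr_sqrtr //.
by have /andP [] := leverage_ge0_le1 (fun tau => acts tau == a) (feature_le a) tau.
Qed.

Lemma sum_sqr_sighat_le a t : (1 <= t)%N ->
  \sum_(1 <= tau < t | acts tau == a) sighat x l cs acts tau a ^+ 2
    <= 2 * d%:R * ln ((d%:R + t%:R) / d%:R).
Proof.
move=> t1; under eq_bigr do rewrite sqr_sighat.
exact (elliptical_potential (fun tau => acts tau == a) (feature_le a) t1).
Qed.

Hypothesis Delta_gt0 : 0 < Delta.
Hypothesis gap : forall (a b : 'I_K) (c : C), b != a -> Cb x theta a c ->
  Delta <= rew x theta a c - rew x theta b c.
Hypothesis ucb : linucb_d_rule x theta l s cs eta acts.

Lemma gap_le_confidence_width (a b : 'I_K) tau : b != a -> (1 <= tau)%N ->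
  ~~ bad x theta l s cs eta acts tau -> acts tau = a -> Cb x theta b (cs tau) ->
  Delta <= 2 * alpha d l s tau * sighat x l cs acts tau a.
Proof.
move=> ba tau1 /existsPn good a_tau Cb_tau.
have /ler_normlP [ra_lo ra_hi] : `|rhat x theta l cs eta acts tau a - rew x theta a (cs tau)|
    <= alpha d l s tau * sighat x l cs acts tau a by rewrite leNgt; exact: good.
have /ler_normlP [rb_lo rb_hi] : `|rhat x theta l cs eta acts tau b - rew x theta b (cs tau)|
    <= alpha d l s tau * sighat x l cs acts tau b by rewrite leNgt; exact: good.
have := ucb tau1 b; rewrite a_tau.
have := gap (a := b) (b := a) ltac:(by rewrite eq_sym) Cb_tau.
lra.
Qed.

Lemma sqr_gap_le_sighat (a b : 'I_K) tau t : b != a -> (1 <= tau <= t)%N ->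
  ~~ bad x theta l s cs eta acts tau -> acts tau = a -> Cb x theta b (cs tau) ->
  Delta ^+ 2 <= 4 * alpha d l s t ^+ 2 * sighat x l cs acts tau a ^+ 2.
Proof.
move=> ba /andP [tau1 tau_t] good a_tau Cb_tau.
have sighat_ge0 : 0 <= sighat x l cs acts tau a := sqrtr_ge0 _.
have width_ge : Delta <= 2 * alpha d l s t * sighat x l cs acts tau a.
  apply: le_trans (gap_le_confidence_width ba tau1 good a_tau Cb_tau) _.
  by rewrite ler_wpM2r // ler_wpM2l // le_alpha.
have -> : 4 * alpha d l s t ^+ 2 * sighat x l cs acts tau a ^+ 2
    = (2 * alpha d l s t * sighat x l cs acts tau a) ^+ 2 by ring.
by rewrite lerXn2r ?nnegrE ?(ltW Delta_gt0) ?(le_trans (ltW Delta_gt0) width_ge).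
Qed.

End LinUCBd.

Theorem lemma9 (R : realType) (K d : nat) (C : Type)
    (x : 'I_K -> C -> 'cV[R]_d) (theta : 'I_K -> 'cV[R]_d)
    (l s Delta : R) (cs : nat -> C) (eta : nat -> R) (acts : nat -> 'I_K)
    (Phi : 'I_K -> 'M[R]_d) :
  (* (A1) *)
  (forall a, norm2 (theta a) <= s) ->
  (forall a c, norm2 (x a c) <= l) ->
  (* (A2) *)
  0 < Delta ->
  (forall (a b : 'I_K) (c : C), b != a -> Cb x theta a c ->
     Delta <= rew x theta a c - rew x theta b c) ->
  (* the arms are pulled by LinUCB-d *)
  linucb_d_rule x theta l s cs eta acts ->
  (* choice of Phi_b: columns in X_b, lambda_min(Phi_b^T Phi_b) > 0 *)
  (forall (b : 'I_K) (j : 'I_d),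
     exists c, Cb x theta b c /\ col j (Phi b) = x b c) ->
  (forall (b : 'I_K) (e : R), eigenvalue ((Phi b)^T *m Phi b) e -> 0 < e) ->
  forall (a b : 'I_K), b != a -> forall (i : 'I_d) (t : nat), (1 <= t)%N ->
    (Nbar x theta l s cs eta acts t a (Cbi x theta Phi b i))%:R
      <= 8 * alpha d l s t ^+ 2 / Delta ^+ 2 * d%:R
         * ln ((d%:R + t%:R) / d%:R).
Proof.
move=> _ x_le Delta_gt0 gap ucb _ _ a b ba i t t1.
set width := 4 * alpha d l s t ^+ 2.
have width_ge0 : 0 <= width by rewrite mulr_ge0 ?sqr_ge0.
have count_le : (Nbar x theta l s cs eta acts t a (Cbi x theta Phi b i))%:R * Delta ^+ 2
    <= \sum_(1 <= tau < t | acts tau == a) width * sighat x l cs acts tau a ^+ 2.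
  rewrite /index_iota subn1; apply: ler_count_sum => [tau /and3P [] // | tau _ | tau].
    by rewrite mulr_ge0 ?sqr_ge0.
  rewrite mem_iota add1n prednK // => /andP [tau1 tau_t].
  case/and3P => /eqP a_tau /andP [Cb_tau _] good.
  by apply: sqr_gap_le_sighat good a_tau Cb_tau; rewrite // tau1 ltnW.
rewrite -(ler_pM2r (exprn_gt0 2 Delta_gt0)); apply: le_trans count_le _.
have -> : 8 * alpha d l s t ^+ 2 / Delta ^+ 2 * d%:R * ln ((d%:R + t%:R) / d%:R) * Delta ^+ 2
    = width * (2 * d%:R * ln ((d%:R + t%:R) / d%:R)).
  by rewrite /width; field; rewrite gt_eqF.
by rewrite -mulr_sumr ler_wpM2l // sum_sqr_sighat_le.
Qed.
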